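(* Let $N$ be an NFA and let $\sim$ be an equivalence relation on its vertex set that refines $\sim_{\mathrm{fwd}}$. Let $\bar N$ be the NFA obtained by grouping $N$ by $\sim$. Then $\bar N$ has a conflict if and only if $N$ has a conflict.
   Context: An NFA $N$ over a finite alphabet $A$, with action set $T$ and a relation $\mathrm{conf}\subseteq T\times T$, consists of a finite vertex set $V$, a starting vertex $v_s\in V$, an accepting action set $T_v\subseteq T$ for each $v\in V$, and a set of labeled edges $v\xrightarrow{\lambda}w$ with $v,w\in V$ and $\lambda\in A\cup\{\varepsilon\}$. For $U,W\subseteq T$, $\mathrm{conf}(U,W)$ means $\mathrm{conf}(a,b)$ for some $a\in U,b\in W$. For a vertex $u$ and a finite sequence $\tau=\tau_1\cdots\tau_r$ ($r\ge0$) with $\tau_i\in A\cup\{\varepsilon\}$, a vertex $w$ is reachable from $u$ on $\tau$ if there are vertices $u=v_1,\dots,v_{r+1}=w$ with an edge $v_i\xrightarrow{\tau_i}v_{i+1}$ for each $i$; $w$ is reachable from $u$ on a string $\zeta\in A^*$ if it is reachable on some sequence whose concatenation (reading $\varepsilon$ as the empty string) equals $\zeta$. A conflict in $N$ consists of two (not necessarily distinct) vertices $w,w'$ that are both reachable from $v_s$ on the same string $\zeta\in A^*$ and satisfy $\mathrm{conf}(T_w,T_{w'})$. Given an equivalence relation $\sim$ on $V$, the grouped NFA $\bar N$ has as vertices the equivalence classes, starting vertex the class of $v_s$, action sets $T_{\bar v}=\bigcup_{v\in\bar v}T_v$, and an edge $\bar v\xrightarrow{\lambda}\bar w$ iff some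 $v\in\bar v$, $w\in\bar w$ have an edge $v\xrightarrow{\lambda}w$ in $N$. Vertices $v_1,v_2$ of $N$ are forward-equivalent, $v_1\sim_{\mathrm{fwd}}v_2$, if for every finite sequence $\tau$ over $A\cup\{\varepsilon\}$, $v_1$ is reachable from $v_s$ on $\tau$ iff $v_2$ is reachable from $v_s$ on $\tau$. *)

From mathcomp Require Import all_boot.
Set Implicit Arguments. Unset Strict Implicit. Unset Printing Implicit Defensive.

(* An NFA over a finite alphabet A (finType), with vertex type V (finType),
   actions in T, is given by: a start vertex vs : V, accepting action sets
   acc : V -> T -> Prop (acc v t <-> t \in T_v), and labeled edges
   edge : V -> option A -> V -> Prop, where the label None stands for epsilon. *)

Fixpoint reach_seq {V A : Type} (edge : V -> option A -> V -> Prop)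
    (u : V) (tau : seq (option A)) (w : V) : Prop :=
  match tau with
  | [::] => u = w
  | l :: tau' => exists v, edge u l v /\ reach_seq edge v tau' w
  end.

Definition reach_str {V A : Type} (edge : V -> option A -> V -> Prop)
    (u : V) (zeta : seq A) (w : V) : Prop :=
  exists tau : seq (option A), pmap id tau = zeta /\ reach_seq edge u tau w.

Definition conf_sets {T : Type} (conf : T -> T -> Prop) (U W : T -> Prop) : Prop :=
  exists a b, U a /\ W b /\ conf a b.

Definition has_conflict {V A T : Type} (conf : T -> T -> Prop) (vs : V)
    (acc : V -> T -> Prop) (edge : V -> option A -> V -> Prop) : Prop :=
  exists (w w' : V) (zeta : seq A),
    reach_str edge vs zeta w /\ reach_str edge vs zeta w' /\
    conf_sets conf (acc w) (acc w').

Definition fwd_equiv {V A : Type} (vs : V) (edge : V -> option A -> V -> Prop)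
    (v1 v2 : V) : Prop :=
  forall tau : seq (option A), reach_seq edge vs tau v1 <-> reach_seq edge vs tau v2.

Definition eclass {V : finType} (e : rel V) (v : V) : {set V} := [set w | e v w].

Definition gvert {V : finType} (e : rel V) :=
  {C : {set V} | [exists v, C == eclass e v]}.

Lemma eclass_is_class {V : finType} (e : rel V) (v : V) :
  [exists u, eclass e v == eclass e u].
Proof. by apply/existsP; exists v. Qed.

Definition gclass_of {V : finType} (e : rel V) (v : V) : gvert e :=
  exist _ (eclass e v) (eclass_is_class e v).

Definition gstart {V : finType} (e : rel V) (vs : V) : gvert e := gclass_of e vs.

Definition gacc {V : finType} {T : Type} (e : rel V) (acc : V -> T -> Prop)
    (C : gvert e) (t : T) : Prop :=
  exists v, v \in sval C /\ acc v t.

Definition gedge {V A : finType} (e : rel V) (edge : V -> option A -> V -> Prop)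
    (C : gvert e) (l : option A) (D : gvert e) : Prop :=
  exists v w, [/\ v \in sval C, w \in sval D & edge v l w].

From mathcomp Require Import all_boot.

Set Implicit Arguments.
Unset Strict Implicit.
Unset Printing Implicit Defensive.

(* Grouping only adds behaviour, so every conflict of N is one of the grouped
   NFA. Conversely, a run of the grouped NFA from the class of the start vertex
   can be lifted, step by step, to runs of N reaching every member of the
   current class: the edge taken lands on some member of the next class, and
   forward equivalence transfers reachability (on the same sequence) to all
   other members. Hence the accepting actions witnessing a conflict of the
   grouped NFA are carried by vertices of N reachable on the same string. *)

Lemma reach_seq_cat {V A : Type} (edge : V -> option A -> V -> Prop) s t u w :
  reach_seq edge u (s ++ t) w <->
  exists m, reach_seq edge u s m /\ reach_seq edge m t w.
Proof.
elim: s u => [|l s IH] u /=.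
  by split=> [H | [m [-> H]]]; first exists u.
split=> [[v [Huv /IH [m [Hvm Hmw]]]] | [m [[v [Huv Hvm]] Hmw]]].
  by exists m; split=> //; exists v.
by exists v; split=> //; apply/IH; exists m.
Qed.

Lemma reach_seq_rcons {V A : Type} (edge : V -> option A -> V -> Prop) s l u m w :
  reach_seq edge u s m -> edge m l w -> reach_seq edge u (rcons s l) w.
Proof. by move=> Hum Hmw; rewrite -cats1; apply/reach_seq_cat; exists m; split=> //; exists w. Qed.

Lemma has_conflict_sim {V1 V2 A T : Type} (conf : T -> T -> Prop)
    (vs1 : V1) (acc1 : V1 -> T -> Prop) (edge1 : V1 -> option A -> V1 -> Prop)
    (vs2 : V2) (acc2 : V2 -> T -> Prop) (edge2 : V2 -> option A -> V2 -> Prop) :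
  (forall zeta w1 a, reach_str edge1 vs1 zeta w1 -> acc1 w1 a ->
     exists w2, reach_str edge2 vs2 zeta w2 /\ acc2 w2 a) ->
  has_conflict conf vs1 acc1 edge1 -> has_conflict conf vs2 acc2 edge2.
Proof.
move=> sim [w [w' [zeta [Hw [Hw' [a [b [Ha [Hb Hab]]]]]]]]].
have [u [Hu Hua]] := sim _ _ _ Hw Ha.
have [u' [Hu' Hub]] := sim _ _ _ Hw' Hb.
by exists u, u', zeta; split=> //; split=> //; exists a, b.
Qed.

Section Grouping.

Variables (V A : finType) (edge : V -> option A -> V -> Prop) (e : rel V).
Hypothesis e_equiv : equivalence_rel e.

Lemma mem_gclass_of v : v \in sval (gclass_of e v).
Proof. by rewrite inE; case: (e_equiv v v v). Qed.

Lemma gvert_mem_equiv (C : gvert e) v w : v \in sval C -> w \in sval C -> e v w.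
Proof.
case: C => S /= /existsP [x /eqP ->]; rewrite !inE => Hxv Hxw.
have Hvx : e v x by case: (e_equiv x v x) => Hxx /(_ Hxv) <-.
by case: (e_equiv v x w) => _ /(_ Hvx) ->.
Qed.

Lemma reach_seq_gclass tau u w : reach_seq edge u tau w ->
  reach_seq (@gedge V A e edge) (gclass_of e u) tau (gclass_of e w).
Proof.
elim: tau u => [|l tau IH] u /=; first by move=> ->.
move=> [m [Hum Hmw]]; exists (gclass_of e m); split; last exact: IH.
by exists u, m; split; rewrite ?mem_gclass_of.
Qed.

Variable vs : V.
Hypothesis e_fwd : forall v1 v2, e v1 v2 -> fwd_equiv vs edge v1 v2.

Lemma reach_seq_gedge_lift tau sigma (C0 C : gvert e) :
  (forall u, u \in sval C0 -> reach_seq edge vs sigma u) ->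
  reach_seq (@gedge V A e edge) C0 tau C ->
  forall v, v \in sval C -> reach_seq edge vs (sigma ++ tau) v.
Proof.
elim: tau sigma C0 => [|l tau IH] sigma C0 /= HC0; first by move=> <-; rewrite cats0.
move=> [D [[u [w [Hu Hw Huw]]] HDC]].
rewrite -cat_rcons; apply: (IH _ D) HDC => w' Hw'.
apply/(e_fwd (gvert_mem_equiv Hw Hw') (rcons sigma l)).
exact: reach_seq_rcons (HC0 u Hu) Huw.
Qed.

Lemma reach_str_gstart_lift zeta (C : gvert e) v :
  reach_str (@gedge V A e edge) (gstart e vs) zeta C -> v \in sval C ->
  reach_str edge vs zeta v.
Proof.
move=> [tau [Hzeta HC]] Hv; exists tau; split=> //.
rewrite -[tau]cat0s; apply: (reach_seq_gedge_lift _ HC) Hv => u Hu.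
exact/(e_fwd (gvert_mem_equiv (mem_gclass_of vs) Hu) [::]).
Qed.

End Grouping.

Theorem mainTheorem5 (V A : finType) (T : Type) (conf : T -> T -> Prop)
    (vs : V) (acc : V -> T -> Prop) (edge : V -> option A -> V -> Prop)
    (e : rel V) :
  equivalence_rel e ->
  (forall v1 v2 : V, e v1 v2 -> fwd_equiv vs edge v1 v2) ->
  (has_conflict conf (gstart e vs) (@gacc V T e acc) (@gedge V A e edge) <->
   has_conflict conf vs acc edge).
Proof.
move=> e_equiv e_fwd; split; apply: has_conflict_sim.
  move=> zeta C a HC [v [Hv Hva]]; exists v; split=> //.
  exact: reach_str_gstart_lift HC Hv.
move=> zeta w a [tau [Hzeta Hw]] Hwa; exists (gclass_of e w); split.
  by exists tau; split=> //; exact: reach_seq_gclass.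
by exists w; rewrite mem_gclass_of.
Qed.
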